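(* Let $K$ be a field of characteristic $0$ and let $K[x,y]$ be the polynomial algebra in two variables over $K$. Consider the following bijections of the set $K[x,y]\times K[x,y]$ of pairs of polynomials: (E1) for $a\in K^{\ast}$ and an integer $k\ge 2$, the map $(u,v)\mapsto (u+a\,v^k,\ v)$; (E2) for $a\in K^{\ast}$ and an integer $k\ge 2$, the map $(u,v)\mapsto (u,\ v+a\,u^k)$. Let $A$ be the group (under composition) generated by all transformations of type (E1), let $B$ be the group generated by all transformations of type (E2), and let $G$ be the group generated by all transformations of types (E1) and (E2) together. Then $G$ is the free product of its subgroups $A$ and $B$, i.e. the homomorphism $A\ast B\to G$ induced by the inclusions $A\hookrightarrow G$ and $B\hookrightarrow G$ is an isomorphism. (The subgroups $A$ and $B$ are abelian.)
   Context: Via the action on the pair $(x,y)$, transformations of pairs of polynomials correspond to (tuples of images under) automorphisms of $K[x,y]$; the groups $A$, $B$, $G$ are groups of permutations of $K[x,y]\times K[x,y]$ under composition. *)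

From HB Require Import structures.
From mathcomp Require Import all_boot all_algebra.
From mathcomp Require Export mpoly.
Set Implicit Arguments. Unset Strict Implicit. Unset Printing Implicit Defensive.
Import GRing.Theory.
Local Open Scope ring_scope.

(* Pairs of polynomials in K[x,y] (x = 'X_0, y = 'X_1). *)
Definition pairK (K : fieldType) := ({mpoly K[2]} * {mpoly K[2]})%type.

Definition E1 (K : fieldType) (a : K) (k : nat) : pairK K -> pairK K :=
  fun uv => (uv.1 + a *: uv.2 ^+ k, uv.2).
Definition E2 (K : fieldType) (a : K) (k : nat) : pairK K -> pairK K :=
  fun uv => (uv.1, uv.2 + a *: uv.1 ^+ k).

Definition isE1 (K : fieldType) (f : pairK K -> pairK K) : Prop :=
  exists a k, a != 0 /\ (2 <= k)%N /\ f = E1 a k.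
Definition isE2 (K : fieldType) (f : pairK K -> pairK K) : Prop :=
  exists a k, a != 0 /\ (2 <= k)%N /\ f = E2 a k.

Inductive gen_group (T : Type) (S : (T -> T) -> Prop) : (T -> T) -> Prop :=
| gg_gen f : S f -> gen_group S f
| gg_id : gen_group S id
| gg_comp f g : gen_group S f -> gen_group S g -> gen_group S (f \o g)
| gg_inv f g : gen_group S f -> cancel f g -> cancel g f -> gen_group S g
| gg_ext f g : gen_group S f -> f =1 g -> gen_group S g.

Definition groupA (K : fieldType) := gen_group (@isE1 K).
Definition groupB (K : fieldType) := gen_group (@isE2 K).
Definition groupG (K : fieldType) :=
  gen_group (fun f => @isE1 K f \/ @isE2 K f).

(* Elements of the free product A * B, as reduced words:
   letters tagged true come from A, false from B; no letter is the identity,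
   and consecutive letters come from different factors. *)
Definition reduced_word (K : fieldType) (w : seq (bool * (pairK K -> pairK K))) : Prop :=
  foldr (fun x P =>
           ((if x.1 then groupA x.2 else groupB x.2) /\ ~ (x.2 =1 id)) /\ P)
        True w /\
  sorted (fun b c : bool => b != c) (map fst w).

(* The canonical map A * B -> G : product of the letters (composition). *)
Definition eval_word (K : fieldType) (w : seq (bool * (pairK K -> pairK K))) :
  pairK K -> pairK K := foldr (fun x acc => x.2 \o acc) id w.

From HB Require Import structures.
From mathcomp Require Import all_boot all_algebra.
From mathcomp Require Import mpoly zify.
From Stdlib Require Import Classical FunctionalExtensionality.
Set Implicit Arguments. Unset Strict Implicit. Unset Printing Implicit Defensive.
Import GRing.Theory.
Local Open Scope ring_scope.

(* Every element of A is a shear (u, v) |-> (u + P(v), v) with P free of terms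
   of degree < 2, and symmetrically for B, so A and B are abelian.  Restrict
   the image of (x, y) to the diagonal x = y: a nontrivial shear applied to a
   pair whose unchanged coordinate has degree at least 1 and at least that of
   the other one raises the degree of the changed coordinate to
   deg P * deg (unchanged) > deg (unchanged).  Hence, by ping-pong, the image
   of (x, y) under a reduced word remembers the factor of the word's first
   letter, which yields uniqueness of reduced words by induction.  Degrees
   multiply under composition over any field. *)

Section Shears.
Variable K : fieldType.
Implicit Types (P Q : {poly K}) (p : pairK K) (b : bool).

Definition shear b P : pairK K -> pairK K :=
  if b then fun p => (p.1 + horner_alg p.2 P, p.2)
  else fun p => (p.1, p.2 + horner_alg p.1 P).

Lemma shear0 b : shear b 0 =1 id.
Proof. by case: b => -[u v] /=; rewrite rmorph0 addr0. Qed.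

Lemma shearD b P Q p : shear b (P + Q) p = shear b P (shear b Q p).
Proof. by case: b; case: p => u v /=; rewrite rmorphD addrA addrAC. Qed.

Lemma shearK b P : cancel (shear b P) (shear b (- P)).
Proof. by case: b => -[u v] /=; rewrite rmorphN addrK. Qed.

Lemma shearNK b P : cancel (shear b (- P)) (shear b P).
Proof. by move=> p; have := shearK b (- P) p; rewrite opprK. Qed.

Lemma shear_monomial b (a : K) k :
  shear b (a *: 'X^k) =1 (if b then E1 a k else E2 a k).
Proof.
by case: b => -[u v];
  rewrite /= /E1 /E2 linearZ rmorphXn /= horner_algX mulr_algl.
Qed.

Definition shear_gen b := if b then @isE1 K else @isE2 K.

Definition factor b := gen_group (shear_gen b).

Lemma factor_shear b f :
  factor b f -> exists2 P, take_poly 2 P = 0 & f =1 shear b P.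
Proof.
elim=> {f} [f gen_f | | f g _ [P P2 eP] _ [Q Q2 eQ] | f g _ [P P2 eP] _ gf
            | f g _ [P P2 eP] fg].
- have [a [k [_ [k2 ->]]]] : exists a k, a != 0 /\ (2 <= k)%N /\
      f = (if b then E1 a k else E2 a k) by case: b gen_f.
  exists (a *: 'X^k); last by move=> p; rewrite shear_monomial.
  by rewrite take_polyZ -[k](subnK k2) exprD take_polyMXn_0 scaler0.
- by exists 0; [rewrite take_poly0r | move=> p; rewrite shear0].
- exists (P + Q); first by rewrite take_polyD P2 Q2 addr0.
  by move=> p; rewrite shearD /= eP eQ.
- exists (- P); first by rewrite raddfN /= P2 oppr0.
  by move=> p; rewrite -[g p](shearK b P) -eP gf.
- by exists P => // p; rewrite -fg.
Qed.

Lemma factor_comm b f g : factor b f -> factor b g -> f \o g =1 g \o f.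
Proof.
move=> /factor_shear[P _ eP] /factor_shear[Q _ eQ] p /=.
by rewrite !eP !eQ -!shearD addrC.
Qed.

Lemma factor_inv b f :
  factor b f -> exists g, [/\ factor b g, cancel f g & cancel g f].
Proof.
move=> fb; have [P _ eP] := factor_shear fb.
have fK : cancel f (shear b (- P)) by move=> p; rewrite eP shearK.
have Kf : cancel (shear b (- P)) f by move=> p; rewrite eP shearNK.
by exists (shear b (- P)); split=> //; apply: gg_inv fb fK Kf.
Qed.

Lemma nontrivial_shear_size b P :
  take_poly 2 P = 0 -> ~ shear b P =1 id -> (3 <= size P)%N.
Proof.
move=> P2 nid; rewrite leqNgt; apply/negP => sP.
by apply: nid; rewrite -(take_poly_id sP) P2; apply: shear0.
Qed.

Definition moved b p := if b then p.1 else p.2.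
Definition kept b p := if b then p.2 else p.1.

Lemma kept_shear b P p : kept b (shear b P p) = kept b p.
Proof. by case: b. Qed.

Lemma moved_shear b P p :
  moved b (shear b P p) = moved b p + horner_alg (kept b p) P.
Proof. by case: b. Qed.

Local Notation diag := (mmap (@polyC K) (fun _ : 'I_2 => 'X)).

Lemma diag_horner_alg (v : {mpoly K[2]}) P :
  diag (horner_alg v P) = P \Po diag v.
Proof.
rewrite /horner_alg /horner_morph /comp_poly -horner_map -map_poly_comp.
by congr (_.[_]); apply: eq_map_poly => c /=; rewrite alg_mpolyC mmapC.
Qed.

Lemma diagX i : diag 'X_i = 'X.
Proof. by rewrite mmapX mmap1U. Qed.

Definition dsize (m : {mpoly K[2]}) := size (diag m).

Lemma size_addr_comp P (q r : {poly K}) :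
  (3 <= size P)%N -> (2 <= size q)%N -> (size r <= size q)%N ->
  (size q < size (r + (P \Po q))%R)%N.
Proof.
move=> P3 q2 rq; have qPq : (size q < size (P \Po q))%N.
  move: (size_comp_poly P q) P3 q2.
  by set a := size P; set c := size q; set d := size _; nia.
by rewrite addrC size_polyDl // (leq_ltn_trans rq).
Qed.

(* The coordinate moved by the last applied shear has the larger degree;
   [None] encodes the starting pair (x, y). *)
Definition pingpong_inv (o : option bool) p :=
  if o is Some b then (2 <= dsize (kept b p) < dsize (moved b p))%N
  else (dsize p.1 == 2%N) && (dsize p.2 == 2%N).

Lemma pingpong_inv_shear b P o p :
  (3 <= size P)%N -> o != Some b -> pingpong_inv o p ->
  pingpong_inv (Some b) (shear b P p).
Proof.
move=> P3 ob inv_p.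
have [k2 mk] : (2 <= dsize (kept b p))%N /\
               (dsize (moved b p) <= dsize (kept b p))%N.
  case: o ob inv_p => [c|] /=; last by case: b => _ /andP[/eqP-> /eqP->].
  by case: b c => [] [] //= _; lia.
rewrite /= kept_shear moved_shear k2 /dsize mmapD diag_horner_alg.
exact: size_addr_comp.
Qed.

Lemma pingpong_inv_uniq o1 o2 p :
  pingpong_inv o1 p -> pingpong_inv o2 p -> o1 = o2.
Proof. by case: o1 o2 => [[]|] [[]|] //=; lia. Qed.

End Shears.

Section Words.
Variable K : fieldType.
Local Notation word := (seq (bool * (pairK K -> pairK K))).
Implicit Types (w : word) (f g h : pairK K -> pairK K).

Definition head_tag w := ohead (map fst w).

Lemma reduced_cons b h w : reduced_word ((b, h) :: w) <->
  [/\ factor b h, ~ h =1 id, reduced_word w & head_tag w != Some b].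
Proof.
have fE : (if b then groupA h else groupB h) <-> factor b h by case: b.
rewrite /reduced_word /head_tag /= fE; case: w => [|[c y] w] /=.
  by split=> [[[[]]]|[]].
rewrite eq_sym /=.
by split=> [[[[? ?] [? ?]] /andP[-> ?]] | [? ? [[? ?] ?] ->]].
Qed.

Lemma reduced_pingpong w :
  reduced_word w -> pingpong_inv (head_tag w) (eval_word w ('X_0, 'X_1)).
Proof.
elim: w => [_|[b h] w IH /reduced_cons[hb nid /IH inv_w tag_w]].
  by rewrite /= /dsize !diagX size_polyX.
have [P P2 eP] := factor_shear hb.
rewrite /= eP; apply: pingpong_inv_shear tag_w inv_w.
apply: (nontrivial_shear_size (b := b) P2) => sh_id.
by apply: nid => p; rewrite eP sh_id.
Qed.

Lemma eval_word_head_tag w1 w2 : reduced_word w1 -> reduced_word w2 ->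
  eval_word w1 =1 eval_word w2 -> head_tag w1 = head_tag w2.
Proof.
move=> /reduced_pingpong inv1 /reduced_pingpong inv2 e12.
by apply: pingpong_inv_uniq inv1 _; rewrite e12.
Qed.

Definition has_normal_form f := exists2 w, reduced_word w & eval_word w =1 f.

Lemma normal_form_ext f g : f =1 g -> has_normal_form f -> has_normal_form g.
Proof. by move=> fg [w rw ew]; exists w => // p; rewrite ew. Qed.

Lemma normal_form_id : has_normal_form id.
Proof. by exists [::]. Qed.

Lemma normal_form_lmul b h f :
  factor b h -> has_normal_form f -> has_normal_form (h \o f).
Proof.
move=> hb [w rw ew]; have [hid | nidh] := classic (h =1 id).
  by exists w => // p; rewrite /= hid ew.
case: w rw ew => [|[c y] w] rw ew.
  by exists [:: (b, h)] => [|p]; [apply/reduced_cons | rewrite /= -ew].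
have /reduced_cons[yc _ rw' tag_w] := rw.
have [cb | ncb] := eqVneq c b; last first.
  exists ((b, h) :: (c, y) :: w) => [|p]; last by rewrite /= -ew.
  by apply/reduced_cons.
rewrite {c}cb in yc rw ew tag_w *.
have [hyid | nidhy] := classic (h \o y =1 id).
  by exists w => // p; rewrite /= -ew; symmetry; apply: hyid.
exists ((b, h \o y) :: w) => [|p]; last by rewrite /= -ew.
by apply/reduced_cons; split=> //; apply: gg_comp.
Qed.

Lemma normal_form_comp f g :
  has_normal_form f -> has_normal_form g -> has_normal_form (f \o g).
Proof.
move=> [w rw ew] ng; apply: normal_form_ext (fun p => ew (g p)) _.
elim: w rw {ew} => [_ | [b h] w IH /reduced_cons[hb _ /IH nf _]] //.
exact: normal_form_lmul hb nf.
Qed.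

Lemma reduced_linv w :
  reduced_word w -> exists2 g, has_normal_form g & cancel (eval_word w) g.
Proof.
elim: w => [_ | [b h] w IH /reduced_cons[hb _ /IH[g ng wK] _]].
  by exists id; [apply: normal_form_id | move=> p].
have [h' [h'b hK _]] := factor_inv hb.
exists (g \o h'); last by move=> p; rewrite /= hK wK.
exact/normal_form_comp/(normal_form_lmul h'b normal_form_id).
Qed.

Lemma normal_form_inv f g :
  has_normal_form f -> cancel g f -> has_normal_form g.
Proof.
move=> [w rw ew] gK; have [g' ng' wK] := reduced_linv rw.
by apply: normal_form_ext ng' => p; rewrite -{1}(gK p) -ew wK.
Qed.

Lemma groupG_normal_form f : groupG f -> has_normal_form f.
Proof.
elim=> {f} [f [E|E] | | f g _ nf _ ng | f g _ nf _ gK | f g _ nf fg].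
- exact: (normal_form_lmul (b := true) (gg_gen E) normal_form_id).
- exact: (normal_form_lmul (b := false) (gg_gen E) normal_form_id).
- exact: normal_form_id.
- exact: normal_form_comp.
- exact: normal_form_inv nf gK.
- exact: normal_form_ext fg nf.
Qed.

Lemma reduced_word_inj w1 w2 : reduced_word w1 -> reduced_word w2 ->
  eval_word w1 =1 eval_word w2 -> w1 = w2.
Proof.
elim: w1 w2 => [|[b h] w1 IH] w2 r1 r2 e12;
  have := eval_word_head_tag r1 r2 e12; first by case: w2 {r2 e12} => [|[]].
case: w2 r2 e12 => [|[c y] w2] r2 e12 //= [cb]; rewrite -{c}cb in r2 e12 *.
have /reduced_cons[hb _ r1' tag1] := r1.
have /reduced_cons[yb _ r2' tag2] := r2.
have [h' [h'b hK Kh]] := factor_inv hb.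
have e12' : eval_word w1 =1 (h' \o y) \o eval_word w2.
  by move=> p; rewrite /= -[eval_word w1 p]hK; congr h'; apply: e12.
have [hyid | nidhy] := classic (h' \o y =1 id).
  have -> : h = y.
    apply: functional_extensionality => p.
    by have /(congr1 h) := hyid p; rewrite /= Kh.
  by rewrite (IH w2 r1' r2') // => p; rewrite e12'; apply: hyid.
have r3 : reduced_word ((b, h' \o y) :: w2).
  by apply/reduced_cons; split=> //; apply: gg_comp.
by rewrite (eval_word_head_tag r1' r3 e12') /= eqxx in tag1.
Qed.

End Words.

Theorem lemma3p2 (K : fieldType) (charK0 : [pchar K] =i pred0) :
  (* A and B are abelian *)
  (forall f g, @groupA K f -> @groupA K g -> f \o g =1 g \o f) /\
  (forall f g, @groupB K f -> @groupB K g -> f \o g =1 g \o f) /\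
  (* A * B -> G is surjective *)
  (forall f, @groupG K f -> exists w, reduced_word w /\ eval_word w =1 f) /\
  (* A * B -> G is injective *)
  (forall w1 w2, @reduced_word K w1 -> @reduced_word K w2 ->
     eval_word w1 =1 eval_word w2 -> w1 = w2).
Proof.
split; first by move=> f g; apply: (factor_comm (b := true)).
split; first by move=> f g; apply: (factor_comm (b := false)).
split; last exact: reduced_word_inj.
by move=> f /groupG_normal_form[w rw ew]; exists w.
Qed.
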